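(* Let $k\ge1$, $m_1,\dots,m_k\ge1$ integers with at least one $m_i\neq1$, and $\varepsilon_1,\dots,\varepsilon_k\in\{-1,1\}$. Then $\mathcal S(\underbrace{0,\dots,0}_{m_1-1},\varepsilon_1,\underbrace{0,\dots,0}_{m_2-1},\varepsilon_2,\dots,\underbrace{0,\dots,0}_{m_k-1},\varepsilon_k,1)=0.$
   Context: Let $V=\mathbb Q^\times\otimes_{\mathbb Z}\mathbb Q$ (torsion, in particular $-1$, becomes $0$); for $f\in\mathbb Q^\times$ write $f$ for its image in $V$. Tensors in $V^{\otimes n}$ are multilinear in the multiplicative sense, and any formal tensor having the number $0$ as a factor is interpreted as $0$. Define $\mu(x,y)=1-y/x$ if $x\ne0$, $\mu(0,y)=y$. For a tuple $(a_1,\dots,a_m)$, $m\ge2$ (the decorated polygon $P(a_1,\dots,a_m)$ with root decoration $a_m$, attached to $G(a_{m-1},\dots,a_1;a_m)$), define $\mathcal S(a_1,\dots,a_m)\in V^{\otimes(m-1)}$ by $\mathcal S(a_1,a_2)=\mu(a_1,a_2)$ and, for $m\ge3$, $\mathcal S(a_1,\dots,a_m)=\sum_{i=1}^{m-1}\mathcal S(a_1,\dots,\widehat{a_i},\dots,a_m)\otimes\mu(a_i,a_{i+1})-\sum_{i=2}^{m-1}\mathcal S(a_1,\dots,\widehat{a_i},\dots,a_m)\otimes\mu(a_i,a_{i-1})$. *)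

From HB Require Import structures.
From mathcomp Require Import all_boot all_order all_algebra.
Set Implicit Arguments. Unset Strict Implicit. Unset Printing Implicit Defensive.
Import Order.TTheory GRing.Theory Num.Theory.
Local Open Scope ring_scope.

Definition mu (x y : rat) : rat := if x == 0 then y else 1 - y / x.

(* A formal tensor in V^{(x) n}, V = Q^x (x)_Z Q: a finite Z-linear combination
   of pure tensors f_1 (x) ... (x) f_n with f_i in Q (a factor 0 makes the pure
   tensor 0, by the stated convention). *)
Definition ftensor := seq (int * seq rat).

Definition tappend (t : ftensor) (f : rat) : ftensor :=
  [seq (x.1, rcons x.2 f) | x <- t].
Definition topp (t : ftensor) : ftensor := [seq (- x.1, x.2) | x <- t].

Definition drop_at (i : nat) (a : seq rat) : seq rat := take i a ++ drop i.+1 a.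

Fixpoint S_aux (n : nat) (a : seq rat) : ftensor :=
  match n with
  | 0 => [:: (1%:Z, [:: mu a`_0 a`_1])]
  | n'.+1 =>
      flatten [seq tappend (S_aux n' (drop_at i a)) (mu a`_i a`_i.+1)
              | i <- iota 0 (size a).-1]
      ++ topp (flatten [seq tappend (S_aux n' (drop_at i a)) (mu a`_i a`_i.-1)
              | i <- iota 1 (size a).-2])
  end.

Definition S (a : seq rat) : ftensor := S_aux (size a - 2) a.

(* p-adic valuation on Q^x (the image of f in V = Q^x (x) Q is determined by its
   valuations at all primes; -1 maps to 0).  Value at 0 is irrelevant-set to 0,
   matching the convention that a pure tensor with a factor 0 is 0. *)
Definition vp (p : nat) (q : rat) : rat :=
  if q == 0 then 0
  else ((logn p `|numq q|%N)%:Z - (logn p `|denq q|%N)%:Z)%:~R.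

(* Coordinate of a tensor in V^{(x) n} on the basis vector p_1 (x) ... (x) p_n
   (V has Q-basis the primes). *)
Definition tcoord (t : ftensor) (ps : seq nat) : rat :=
  \sum_(x <- t)
     (x.1)%:~R * (if size x.2 == size ps
                  then \prod_(pf <- zip ps x.2) vp pf.1 pf.2 else 0).

Definition tensor_zero (n : nat) (t : ftensor) : Prop :=
  forall ps : seq nat, size ps = n -> all prime ps -> tcoord t ps = 0.

Definition zeta_word (ms : seq nat) (es : seq rat) : seq rat :=
  flatten [seq rcons (nseq (me.1 - 1) 0) me.2 | me <- zip ms es] ++ [:: 1].

From mathcomp Require Import all_boot all_order all_algebra.
From mathcomp Require Import zify.
Import GRing.Theory Num.Theory.
Local Open Scope ring_scope.

(* All entries of the word lie in {0, 1, -1}, and they all map to 0 in V.  As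
   long as the word contains a 0, every pure tensor produced by the recursion
   for S has a factor in {0, 1, -1}: removing a 0 at position i contributes
   the factor mu(0, a_{i+-1}) = a_{i+-1}, and removing a nonzero entry leaves a
   0 in the shorter word, so induction applies; for a word (x, y) containing
   a 0, mu(x, y) is y or lies in {0, 1}.  Hence every coordinate of S
   vanishes. *)

Definition trivialV (f : rat) : bool := (f == 0) || (f == 1) || (f == -1).

Definition has_trivial_factors (t : ftensor) : bool :=
  all (fun x => has trivialV x.2) t.

Lemma vp_trivialV p f : trivialV f -> vp p f = 0.
Proof. by rewrite /vp => /orP [/orP [] | ] /eqP-> //=; rewrite logn1. Qed.

Lemma nth_trivialV (a : seq rat) i : all trivialV a -> trivialV a`_i.
Proof.
move=> /allP Ha; have [lt_ia | ?] := ltnP i (size a).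
  exact/Ha/mem_nth.
by rewrite nth_default // /trivialV eqxx.
Qed.

Lemma mu0_trivialV y : trivialV y -> trivialV (mu 0 y).
Proof. by rewrite /mu eqxx. Qed.

Lemma mu_x0_trivialV x : trivialV (mu x 0).
Proof. by rewrite /mu; case: ifP; rewrite ?mul0r ?subr0 /trivialV eqxx ?orbT. Qed.

Lemma size_drop_at (a : seq rat) i :
  (i < size a)%N -> size (drop_at i a) = (size a).-1.
Proof. by move=> lt_ia; rewrite /drop_at size_cat size_take size_drop lt_ia; lia. Qed.

Lemma all_drop_at (P : pred rat) (a : seq rat) i : all P a -> all P (drop_at i a).
Proof.
rewrite /drop_at all_cat => Ha; apply/andP; split.
  by rewrite -(cat_take_drop i a) all_cat in Ha; case/andP: Ha.
by rewrite -(cat_take_drop i.+1 a) all_cat in Ha; case/andP: Ha.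
Qed.

Lemma mem_drop_at (a : seq rat) i y :
  (i < size a)%N -> a`_i != y -> y \in a -> y \in drop_at i a.
Proof.
move=> lt_ia neq_y; rewrite -{1}(cat_take_drop i a) (drop_nth 0 lt_ia).
by rewrite /drop_at !mem_cat in_cons eq_sym (negbTE neq_y).
Qed.

Lemma has_trivial_factors_tappend t f :
  trivialV f || has_trivial_factors t -> has_trivial_factors (tappend t f).
Proof.
move=> Htf; rewrite /tappend /has_trivial_factors all_map.
apply/allP => x xt /=; rewrite has_rcons.
by case/orP: Htf => [-> // | /allP/(_ x xt) ->]; rewrite orbT.
Qed.

Lemma has_trivial_factors_topp t :
  has_trivial_factors (topp t) = has_trivial_factors t.
Proof. by rewrite /has_trivial_factors all_map. Qed.

Lemma has_trivial_factors_flatten (ts : seq ftensor) :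
  all has_trivial_factors ts -> has_trivial_factors (flatten ts).
Proof.
move=> /allP Hts; apply/allP => x /flattenP [t /Hts /allP Ht].
exact: Ht.
Qed.

Lemma has_trivial_factors_S_aux n (a : seq rat) :
  size a = n.+2 -> all trivialV a -> 0 \in a ->
  has_trivial_factors (S_aux n a).
Proof.
elim: n a => [|n IHn] a size_a triv_a a0 /=.
  case: a size_a a0 triv_a => [|x [|y [|]]] // _.
  rewrite /has_trivial_factors /= !in_cons in_nil !andbT !orbF.
  by case/orP => /eqP<- /andP [_ ?]; [apply: mu0_trivialV | apply: mu_x0_trivialV].
have step i f : (i < size a)%N -> (a`_i == 0 -> trivialV f) ->
    has_trivial_factors (tappend (S_aux n (drop_at i a)) f).
  move=> lt_ia Hf; apply: has_trivial_factors_tappend.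
  have [/Hf -> // | ai_neq0] := boolP (a`_i == 0).
  rewrite IHn ?orbT ?all_drop_at ?mem_drop_at //.
  by rewrite size_drop_at // size_a.
rewrite [has_trivial_factors _]all_cat -!/(has_trivial_factors _) has_trivial_factors_topp.
apply/andP; split; apply: has_trivial_factors_flatten;
  apply/allP => t /mapP [i]; rewrite mem_iota size_a => /andP [_ lt_i] ->;
  (apply: step => [|/eqP ai0]; first lia);
  by rewrite ai0 mu0_trivialV ?nth_trivialV.
Qed.

Lemma tcoord_trivial_factors (t : ftensor) ps :
  has_trivial_factors t -> tcoord t ps = 0.
Proof.
move=> /allP Ht; rewrite /tcoord big1_seq // => x /andP [_ xt].
case: eqP => [size_eq | _]; last by rewrite mulr0.
apply/eqP; rewrite mulf_eq0 prodf_seq_eq0; apply/orP; right.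
elim: ps x.2 size_eq (Ht x xt) => [|p ps IHps] [|f fs] //= [size_eq].
by case/orP => [/vp_trivialV -> | /IHps -> //]; rewrite ?eqxx ?orbT.
Qed.

Section ZetaWord.

Variables (ms : seq nat) (es : seq rat).

Let blocks := flatten [seq rcons (nseq (me.1 - 1) 0) me.2 | me <- zip ms es].

Lemma all_trivialV_blocks :
  all (fun e => (e == 1) || (e == -1)) es -> all trivialV blocks.
Proof.
rewrite /blocks; elim: ms es => [|m ms' IH] [|e es'] //= /andP [He Hes].
rewrite all_cat IH // andbT all_rcons /trivialV -orbA He orbT /=.
by apply/allP => z /nseqP [-> _]; rewrite eqxx.
Qed.

Lemma mem0_blocks : size ms = size es ->
  all (fun m => 1 <= m)%N ms -> has (fun m => m != 1%N) ms -> 0 \in blocks.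
Proof.
rewrite /blocks; elim: ms es => [|m ms' IH] [|e es'] //= [size_eq].
case/andP => m_gt0 ms_gt0; rewrite mem_cat mem_rcons in_cons mem_nseq eqxx.
by case/orP => [m_neq1 | /IH -> //]; rewrite ?orbT // andbT; lia.
Qed.

End ZetaWord.

Theorem mainTheorem7 (k : nat) (ms : seq nat) (es : seq rat) :
  (1 <= k)%N -> size ms = k -> size es = k ->
  all (fun m => 1 <= m)%N ms -> has (fun m => m != 1%N) ms ->
  all (fun e => (e == 1) || (e == -1)) es ->
  tensor_zero (size (zeta_word ms es)).-1 (S (zeta_word ms es)).
Proof.
move=> _ size_ms size_es ms_gt0 ms_neq1 es_sign ps _ _.
have blocks0 := mem0_blocks ms es (etrans size_ms (esym size_es)) ms_gt0 ms_neq1.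
have triv_blocks := all_trivialV_blocks ms es es_sign.
rewrite /S /zeta_word; set b := flatten _ in blocks0 triv_blocks *.
have size_b : (0 < size b)%N by rewrite lt0n size_eq0; apply: contraTneq blocks0 => ->.
apply/tcoord_trivial_factors/has_trivial_factors_S_aux.
- by rewrite size_cat addn1 subn2; case: (size b) size_b.
- by rewrite all_cat triv_blocks.
- by rewrite mem_cat blocks0.
Qed.
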